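(* Let $p\ge2$, $A\in\mathcal{B}_I(p)$ with common between-group parameter $c$, let $\alpha_k=\frac1{n_k}+\frac{n_k-1}{n_k}b_k$ and $\alpha^\star=\min_{1\le k\le p}\alpha_k$. If $0<\alpha_k<1$ for all $k\in\{1,\dots,p\}$ and $-\frac{\alpha^\star}{p-1}<c<\alpha^\star$, then $A\succ 0$.
   Context: All matrices are real; $\succ 0$ means positive definite. $J_m$ is the $m\times m$ matrix of ones, $J_{m,q}=\mathbf 1_m\mathbf 1_q^\top$. For $n_1,\dots,n_p\ge1$, $n=\sum n_k$, $\mathcal{B}_I(p)$ is the set of symmetric $n\times n$ block matrices $A=(A_{k,\ell})$ (block $A_{k,\ell}$ of size $n_k\times n_\ell$) with diagonal blocks $A_{k,k}=(1-b_k)I_{n_k}+b_kJ_{n_k}$ and off-diagonal blocks $A_{k,\ell}=cJ_{n_k,n_\ell}$ ($k\ne\ell$), where $b_k,c\in]-1,1[$ and $b_k=0$ if $n_k=1$. *)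

From HB Require Import structures.
From mathcomp Require Import all_boot all_order all_algebra.
Set Implicit Arguments. Unset Strict Implicit. Unset Printing Implicit Defensive.
Import Order.TTheory GRing.Theory Num.Theory.
Local Open Scope ring_scope.

Definition posdef (R : realFieldType) (N : nat) (A : 'M[R]_N) : Prop :=
  A^T = A /\ forall x : 'cV[R]_N, x != 0 -> 0 < (x^T *m A *m x) 0 0.

(* The block matrix of B_I(p): block (k,l) is of size n_k x n_l;
   diagonal block (k,k) = (1 - b_k) I + b_k J, off-diagonal block = c J. *)
Definition BI_block (R : realFieldType) (p : nat) (n : 'I_p -> nat)
  (b : 'I_p -> R) (c : R) (k l : 'I_p) : 'M[R]_(n k, n l) :=
  \matrix_(i, j) (if k == l then
                    (1 - b k) * (if (i : nat) == (j : nat) then 1 else 0) + b k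
                  else c).

Definition BI_matrix (R : realFieldType) (p : nat) (n : 'I_p -> nat)
  (b : 'I_p -> R) (c : R) : 'M[R]_(\sum_(k < p) n k) :=
  mxblock (BI_block n b c).

Definition alpha (R : realFieldType) (p : nat) (n : 'I_p -> nat) (b : 'I_p -> R)
  (k : 'I_p) : R :=
  1 / (n k)%:R + ((n k)%:R - 1) / (n k)%:R * b k.

(* minimum of a family over 'I_p (meaningful for p >= 1) *)
Definition min_over (R : realFieldType) (p : nat) (a : 'I_p -> R) : R :=
  let s := [seq a k | k <- enum 'I_p] in
  \big[Num.min/head 0 s]_(x <- s) x.

From HB Require Import structures.
From mathcomp Require Import all_boot all_order all_algebra.
From mathcomp Require Import ring lra.
Import Order.TTheory GRing.Theory Num.Theory.
Set Implicit Arguments.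
Unset Strict Implicit.
Unset Printing Implicit Defensive.
Local Open Scope ring_scope.

(* Write x = (x_1, ..., x_p) along the blocks, s_k for the sum and N_k for the
   squared norm of x_k, and a for the minimum of the alpha_k. The quadratic form
   is  sum_k ((1 - b_k) N_k + (b_k - c) s_k^2) + c (sum_k s_k)^2.  By
   Cauchy-Schwarz s_k^2 <= n_k N_k, so (1 - b_k) N_k + b_k s_k^2 >= alpha_k s_k^2
   >= a s_k^2, and the form is at least  (a - c) sum_k s_k^2 + c (sum_k s_k)^2,
   which is positive as soon as some s_k is nonzero: directly when c >= 0, and
   via (sum_k s_k)^2 <= p sum_k s_k^2, giving (a + (p - 1) c) sum_k s_k^2, when
   c < 0. If all s_k vanish the form reduces to sum_k (1 - b_k) N_k > 0. *)

Section SumsOfSquares.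
Variable R : realFieldType.

Lemma sqr_sum_le_mul_sum_sqr m (f : 'I_m -> R) :
  (\sum_i f i) ^+ 2 <= m%:R * \sum_i f i ^+ 2.
Proof.
have sum_diff_ge0 : 0 <= \sum_i \sum_j (f i - f j) ^+ 2.
  by apply: sumr_ge0 => i _; apply: sumr_ge0 => j _; apply: sqr_ge0.
have expand_diff : \sum_i \sum_j (f i - f j) ^+ 2 =
    \sum_i \sum_(j < m) f i ^+ 2 + \sum_(i < m) \sum_j f j ^+ 2
    - 2 * \sum_i \sum_j f i * f j.
  rewrite mulr_sumr -big_split -sumrB /=; apply: eq_bigr => i _.
  rewrite mulr_sumr -big_split -sumrB /=; apply: eq_bigr => j _; ring.
have sqr_sum : (\sum_i f i) ^+ 2 = \sum_i \sum_j f i * f j.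
  by rewrite expr2 mulr_suml; apply: eq_bigr => i _; rewrite mulr_sumr.
have const_inner : \sum_i \sum_(j < m) f i ^+ 2 = m%:R * \sum_i f i ^+ 2.
  by rewrite mulr_sumr; apply: eq_bigr => i _; rewrite sumr_const card_ord mulr_natl.
have const_outer : \sum_(i < m) \sum_j f j ^+ 2 = m%:R * \sum_i f i ^+ 2.
  by rewrite sumr_const card_ord mulr_natl.
rewrite const_inner const_outer -sqr_sum in expand_diff; lra.
Qed.

Lemma sum_sqr_gt0 m (f : 'I_m -> R) : (exists i, f i != 0) -> 0 < \sum_i f i ^+ 2.
Proof.
case=> i fi_neq0; rewrite lt_def sumr_ge0 ?andbT => [|j _]; last exact: sqr_ge0.
rewrite psumr_neq0 => [|j _]; last exact: sqr_ge0.
by apply/hasP; exists i; rewrite ?mem_index_enum // lt_def sqr_ge0 andbT expf_neq0.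
Qed.

Lemma within_group_bound m (b N s : R) : (0 < m)%N -> b < 1 ->
  s ^+ 2 <= m%:R * N ->
  (1 / m%:R + (m%:R - 1) / m%:R * b) * s ^+ 2 <= (1 - b) * N + b * s ^+ 2.
Proof.
move=> m_gt0 b_lt1 s_le; have m_pos : 0 < m%:R :> R by rewrite ltr0n.
rewrite -(ler_pM2l m_pos) mulrA.
have -> : m%:R * (1 / m%:R + (m%:R - 1) / m%:R * b) = 1 + (m%:R - 1) * b :> R.
  by field; rewrite lt0r_neq0.
have : 0 <= (1 - b) * (m%:R * N - s ^+ 2) by apply: mulr_ge0; lra.
lra.
Qed.

Lemma between_groups_pos p (a c : R) (s : 'I_p -> R) : (1 < p)%N ->
  - a / (p.-1)%:R < c -> c < a -> (exists k, s k != 0) ->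
  0 < (a - c) * \sum_k s k ^+ 2 + c * (\sum_k s k) ^+ 2.
Proof.
move=> p_gt1 c_gt c_lt /sum_sqr_gt0 sum_gt0.
have p1_pos : 0 < (p.-1)%:R :> R by rewrite ltr0n -subn1 subn_gt0.
have p_eq : p%:R = (p.-1)%:R + 1 :> R by rewrite natr1 prednK // ltnW.
have a_p1c : 0 < a + (p.-1)%:R * c by move: c_gt; rewrite ltr_pdivrMr //; lra.
have := sqr_sum_le_mul_sum_sqr s; have := sqr_ge0 (\sum_k s k).
case: (lerP 0 c) => [c_ge0 | c_lt0] S_ge0 S_le; first nra.
rewrite p_eq in S_le; nra.
Qed.

End SumsOfSquares.

Section BlockQuadraticForms.
Variable R : realFieldType.

Definition col_sum m (u : 'cV[R]_m) : R := \sum_i u i 0.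
Definition col_sqnorm m (u : 'cV[R]_m) : R := \sum_i u i 0 ^+ 2.

Lemma col_sqnorm_gt0 m (u : 'cV[R]_m) : u != 0 -> 0 < col_sqnorm u.
Proof.
move=> u_neq0; apply: sum_sqr_gt0; apply/existsP; move: u_neq0.
apply: contraTT => /existsPn u0; rewrite negbK; apply/eqP/matrixP => i j.
by rewrite (ord1 j) mxE; apply/eqP; rewrite -[_ == _]negbK u0.
Qed.

Lemma bilin_mxE m k (u : 'cV[R]_m) (M : 'M[R]_(m, k)) (v : 'cV[R]_k) :
  (u^T *m M *m v) 0 0 = \sum_i \sum_j u i 0 * M i j * v j 0.
Proof.
rewrite mxE exchange_big /=; apply: eq_bigr => j _.
by rewrite mxE big_distrl /=; apply: eq_bigr => i _; rewrite !mxE.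
Qed.

Lemma bilin_mxblock p (n : 'I_p -> nat) (B : forall k l, 'M[R]_(n k, n l))
    (x : 'cV[R]_(\sum_k n k)) :
  (x^T *m mxblock B *m x) 0 0 =
  \sum_k \sum_l ((submxcol x k)^T *m B k l *m submxcol x l) 0 0.
Proof.
rewrite -{1 2}(submxcolK x) tr_mxcol mul_mxrow_mxblock mul_mxrow_mxcol summxE.
rewrite exchange_big; apply: eq_bigr => l _.
by rewrite mulmx_suml summxE.
Qed.

Lemma mxcol_neq0 p (n : 'I_p -> nat) (x : 'cV[R]_(\sum_k n k)) :
  x != 0 -> exists k, submxcol x k != 0.
Proof.
move=> x_neq0; apply/existsP; move: x_neq0.
apply: contraTT => /existsPn x0; rewrite negbK -(submxcolK x) -(mxcol0 1).
by apply/eqP/eq_mxcol => k; apply/eqP; rewrite -[_ == _]negbK x0.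
Qed.

End BlockQuadraticForms.

Section BlockEquicorrelation.
Variables (R : realFieldType) (p : nat) (n : 'I_p -> nat) (b : 'I_p -> R) (c : R).

Lemma tr_BI_matrix : (BI_matrix n b c)^T = BI_matrix n b c.
Proof.
rewrite /BI_matrix tr_mxblock; apply: eq_mxblock => k l; apply/matrixP => i j.
rewrite !mxE [l == k]eq_sym; case: eqP => [k_eq_l|//]; subst l.
by rewrite [(j : nat) == i]eq_sym.
Qed.

Lemma BI_block_offdiag_bilin k l (u : 'cV[R]_(n k)) (v : 'cV[R]_(n l)) :
  k != l -> (u^T *m BI_block n b c k l *m v) 0 0 = c * col_sum u * col_sum v.
Proof.
move=> /negbTE k_neq_l; rewrite bilin_mxE -mulrA mulr_suml mulr_sumr.
apply: eq_bigr => i _; rewrite !mulr_sumr; apply: eq_bigr => j _.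
by rewrite mxE k_neq_l; ring.
Qed.

Lemma BI_block_diag_quad k (u : 'cV[R]_(n k)) :
  (u^T *m BI_block n b c k k *m u) 0 0 =
  (1 - b k) * col_sqnorm u + b k * col_sum u ^+ 2.
Proof.
have diag_part i : \sum_(j < n k) u i 0 * (if (i : nat) == j then 1 else 0) * u j 0
    = u i 0 ^+ 2.
  rewrite (bigD1 i) //= eqxx big1 ?addr0 ?mulr1 ?expr2 // => j /negbTE j_neq_i.
  have -> : ((i : nat) == j) = false by rewrite eq_sym; exact: j_neq_i.
  by rewrite mulr0 mul0r.
have sqr_sum : b k * col_sum u ^+ 2 = \sum_i \sum_j b k * (u i 0 * u j 0).
  by rewrite expr2 mulr_suml mulr_sumr; apply: eq_bigr => i _; rewrite -!mulr_sumr.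
rewrite bilin_mxE sqr_sum mulr_sumr -big_split /=; apply: eq_bigr => i _.
rewrite -diag_part mulr_sumr -big_split /=.
by apply: eq_bigr => j _; rewrite mxE eqxx; case: (_ == _); ring.
Qed.

Lemma BI_matrix_quad (x : 'cV[R]_(\sum_k n k)) :
  let s k := col_sum (submxcol x k) in
  (x^T *m BI_matrix n b c *m x) 0 0 =
  \sum_k ((1 - b k) * col_sqnorm (submxcol x k) + (b k - c) * s k ^+ 2)
  + c * (\sum_k s k) ^+ 2.
Proof.
move=> s; rewrite bilin_mxblock.
have -> : c * (\sum_k s k) ^+ 2 = \sum_k c * s k * \sum_l s l.
  by rewrite expr2 mulr_suml mulr_sumr; apply: eq_bigr => k _; rewrite mulrA.
rewrite -big_split /=; apply: eq_bigr => k _.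
rewrite (bigD1 k) //= BI_block_diag_quad.
rewrite (eq_bigr (fun l => c * s k * s l)) => [|l l_neq_k]; last first.
  by rewrite BI_block_offdiag_bilin // eq_sym.
by rewrite [\sum_l s l](bigD1 k) //= -mulr_sumr /s; ring.
Qed.

End BlockEquicorrelation.

Lemma min_over_le (R : realFieldType) p (a : 'I_p -> R) k : min_over a <= a k.
Proof.
rewrite /min_over; have : a k \in [seq a k | k <- enum 'I_p].
  by apply: map_f; rewrite mem_enum.
elim: [seq a k | k <- enum 'I_p] (head 0 _) => // x s IHs h.
rewrite in_cons big_cons ge_min => /orP [/eqP -> | ak_in_s]; first by rewrite lexx.
by rewrite IHs ?orbT.
Qed.

Theorem corollary2 (R : realFieldType) (p : nat) (n : 'I_p -> nat)
  (b : 'I_p -> R) (c : R)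
  (hp : (2 <= p)%N)
  (hn : forall k, (1 <= n k)%N)
  (hb : forall k, -1 < b k < 1)
  (hb1 : forall k, n k = 1%N -> b k = 0)
  (hc : -1 < c < 1)
  (halpha : forall k, 0 < alpha n b k < 1)
  (hcl : - (min_over (alpha n b)) / (p.-1)%:R < c)
  (hcu : c < min_over (alpha n b)) :
  posdef (BI_matrix n b c).
Proof.
split=> [|x x_neq0]; first exact: tr_BI_matrix.
rewrite BI_matrix_quad /=; set a := min_over (alpha n b) in hcl hcu *.
pose N k := col_sqnorm (submxcol x k); pose s k := col_sum (submxcol x k).
pose g k := (1 - b k) * N k + (b k - a) * s k ^+ 2.
have b_lt1 k : b k < 1 by case/andP: (hb k).
have g_ge0 k : 0 <= g k.
  have within : alpha n b k * s k ^+ 2 <= (1 - b k) * N k + b k * s k ^+ 2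
    := within_group_bound (hn k) (b_lt1 k) (sqr_sum_le_mul_sum_sqr _).
  have : 0 <= (alpha n b k - a) * s k ^+ 2.
    by rewrite mulr_ge0 ?sqr_ge0 // subr_ge0 min_over_le.
  rewrite /g; lra.
have -> : \sum_k ((1 - b k) * N k + (b k - c) * s k ^+ 2) + c * (\sum_k s k) ^+ 2
    = \sum_k g k + ((a - c) * \sum_k s k ^+ 2 + c * (\sum_k s k) ^+ 2).
  rewrite addrA mulr_sumr -big_split; congr (_ + _).
  by apply: eq_bigr => k _ /=; rewrite /g; ring.
case: (pickP (fun k => s k != 0)) => [k sk_neq0 | s0].
  apply: ltr_wpDl; first exact: sumr_ge0.
  by apply: between_groups_pos; last exists k.
have {}s0 k : s k = 0 by apply/eqP; rewrite -[_ == _]negbK s0.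
have [k xk_neq0] := mxcol_neq0 x_neq0.
have -> : \sum_k s k = 0 by rewrite big1.
have -> : \sum_k s k ^+ 2 = 0 by rewrite big1 // => l _; rewrite s0 expr0n.
rewrite expr0n !mulr0 (bigD1 k) //= !addr0; apply: ltr_wpDr; first exact: sumr_ge0.
rewrite /g s0 expr0n mulr0 addr0; apply: mulr_gt0; last exact: col_sqnorm_gt0.
by rewrite subr_gt0.
Qed.
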